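(* (a) $\mathcal{L}\cap\mathcal{U}=\mathcal{C}$. (b) If $A\subseteq\Omega$ satisfies $A\in\mathcal{L}$ and $\Omega\setminus A\in\mathcal{L}$, then $A\in\mathcal{C}$.
   Context: $\Omega$ is the set of infinite sequences $\alpha_0\alpha_1\alpha_2\cdots$ with $\alpha_k\in\{0,1\}$ and $\alpha_0=0$. $\mathcal{C}$ is the collection of cylinder sets, i.e. sets of the form $\{\alpha_0\alpha_1\cdots\in\Omega:\alpha_0\cdots\alpha_n\in E\}$ for some $n\ge1$ and some set $E$ of strings $\alpha_0\cdots\alpha_n$ with $\alpha_0=0$. For $A\subseteq\Omega$ and $n\ge0$, $A^{(n)}=\{\omega\in\Omega:\text{some }\omega'\in A\text{ has the same first }n+1\text{ entries as }\omega\}$. $\mathcal{L}$ is the collection of lower sets, those $A$ with $A=\bigcap_nA^{(n)}$; $\mathcal{U}$ is the collection of upper sets, those $A$ with $A=\bigcup_n\big(\Omega\setminus(\Omega\setminus A)^{(n)}\big)$. *)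

From mathcomp Require Import all_boot.
From mathcomp Require Import boolp classical_sets.
Set Implicit Arguments. Unset Strict Implicit. Unset Printing Implicit Defensive.
Local Open Scope classical_set_scope.

(* Omega: infinite 0/1 sequences (as nat -> bool, false = 0) with alpha_0 = 0. *)
Definition Omega : set (nat -> bool) := [set w | w 0%N = false].

Definition prefix (w : nat -> bool) (n : nat) : seq bool :=
  [seq w i | i <- iota 0 n.+1].

Definition cylinder (A : set (nat -> bool)) : Prop :=
  exists (n : nat) (E : set (seq bool)),
    (1 <= n)%N /\
    (forall s, E s -> size s = n.+1 /\ head true s = false) /\
    A = [set w | Omega w /\ E (prefix w n)].

Definition approx (A : set (nat -> bool)) (n : nat) : set (nat -> bool) :=
  [set w | Omega w /\ exists w', A w' /\ forall i, (i <= n)%N -> w i = w' i].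

Definition lower (A : set (nat -> bool)) : Prop :=
  A = \bigcap_(n in [set: nat]) approx A n.

Definition upper (A : set (nat -> bool)) : Prop :=
  A = \bigcup_(n in [set: nat]) (Omega `\` approx (Omega `\` A) n).

(* Lower sets are the closed subsets of the Cantor space Omega, so when both A
   and Omega \ A are lower, membership in A is decided by some finite prefix
   around every point.  Compactness (a Koenig-style branch argument) turns this
   into a single prefix length valid everywhere, i.e. A is a cylinder;
   conversely a cylinder and its complement are decided by a fixed prefix, hence
   lower.  Since A is upper iff Omega \ A is lower, (a) reduces to (b). *)

From Pilot Require Import Defs.
From mathcomp Require Import all_boot.
From mathcomp Require Import boolp classical_sets.
Set Implicit Arguments.
Unset Strict Implicit.
Unset Printing Implicit Defensive.
Local Open Scope classical_set_scope.

Definition agree (w v : nat -> bool) (n : nat) := forall i, (i <= n)%N -> w i = v i.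

Lemma agree_sym w v n : agree w v n -> agree v w n.
Proof. by move=> wv i le_in; rewrite wv. Qed.

Lemma agree_trans u v w n : agree u v n -> agree v w n -> agree u w n.
Proof. by move=> uv vw i le_in; rewrite uv ?vw. Qed.

Lemma agree_le w v m n : (m <= n)%N -> agree w v n -> agree w v m.
Proof. by move=> le_mn wv i le_im; apply: wv (leq_trans le_im le_mn). Qed.

Lemma agree_prefix w v n : agree w v n <-> Defs.prefix w n = Defs.prefix v n.
Proof.
split=> [wv | wv i le_in].
  by apply/eq_in_map => i; rewrite mem_iota add0n => /andP[_]; apply: wv.
have nth_prefix u : nth false (Defs.prefix u n) i = u i.
  by rewrite (nth_map 0%N) ?nth_iota ?size_iota.
by rewrite -nth_prefix wv nth_prefix.
Qed.

Lemma agree_Omega w v n : agree w v n -> Omega v -> Omega w.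
Proof. by move=> wv; rewrite /Omega /= wv. Qed.

Section CantorCompactness.

Variable P : set (nat -> bool).

Definition locally_determined (p : nat -> bool) :=
  exists m, forall w, agree w p m -> (P w <-> P p).

Definition uniformly_determined (f : nat -> bool) (k : nat) :=
  exists m, forall w v, agree w f k -> agree v f k -> agree w v m -> (P w <-> P v).

Definition extend (f : nat -> bool) (k : nat) (b : bool) :=
  fun i => if i == k then b else f i.

Lemma agree_extend u f k : agree u f k -> agree u (extend f k.+1 (u k.+1)) k.+1.
Proof.
move=> uf i; rewrite /extend leq_eqVlt; case: eqP => [-> //|_] /= le_ik.
exact: uf.
Qed.

Lemma uniformly_determined_split f k :
  uniformly_determined (extend f k.+1 false) k.+1 ->
  uniformly_determined (extend f k.+1 true) k.+1 -> uniformly_determined f k.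
Proof.
move=> [m0 det0] [m1 det1]; exists (maxn (maxn m0 m1) k.+1) => w v wf vf wv.
have agree_m m : (m <= maxn (maxn m0 m1) k.+1)%N -> agree w v m.
  by move=> le_m; apply: agree_le wv.
have wv_k : w k.+1 = v k.+1 by apply: agree_m (leqnn _) _ _; rewrite leq_max leqnn orbT.
have [wf' vf'] := (agree_extend wf, agree_extend vf); rewrite -wv_k in vf'.
case: (w k.+1) wf' vf' => wf' vf'.
- by apply: det1 => //; apply: agree_m; rewrite !leq_max leqnn orbT.
- by apply: det0 => //; apply: agree_m; rewrite !leq_max leqnn.
Qed.

Variable b : nat -> bool.

(* Keeps the extension by [false] unless that one is uniformly determined; if
   the root [b] is not, no [branch k] is, and the diagonal limit of the
   branches is a point around which [P] is not locally determined. *)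
Fixpoint branch (k : nat) : nat -> bool :=
  match k with
  | 0 => b
  | k.+1 => let g := branch k in
      extend g k.+1 (asbool (uniformly_determined (extend g k.+1 false) k.+1))
  end.

Lemma branch_not_determined :
  ~ uniformly_determined b 0 -> forall k, ~ uniformly_determined (branch k) k.
Proof.
move=> ndet0; elim=> [//|k IH] /=.
case: asboolP => [det_false det_true|//].
exact/IH/uniformly_determined_split.
Qed.

Lemma branch_stable i d : branch (i + d) i = branch i i.
Proof.
elim: d => [|d IH]; first by rewrite addn0.
by rewrite addnS /= /extend ltn_eqF // ltnS leq_addr.
Qed.

Definition branch_limit (i : nat) := branch i i.

Lemma agree_branch_limit k : agree branch_limit (branch k) k.
Proof. by move=> i le_ik; rewrite /branch_limit -(subnKC le_ik) branch_stable. Qed.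

Theorem locally_uniformly_determined :
  (forall p, agree p b 0 -> locally_determined p) -> uniformly_determined b 0.
Proof.
move=> loc; apply: contrapT => ndet.
have [m det_m] := loc _ (agree_branch_limit (k := 0)).
apply: (branch_not_determined ndet (k := m)); exists m => w v wf vf _.
have limit_agree u : agree u (branch m) m -> agree u branch_limit m.
  by move=> uf; apply: agree_trans uf (agree_sym (agree_branch_limit (k := m))).
by rewrite (det_m w (limit_agree _ wf)) (det_m v (limit_agree _ vf)).
Qed.

End CantorCompactness.

Definition determined (A : set (nat -> bool)) (n : nat) :=
  forall w v, Omega w -> A v -> agree w v n -> A w.

Lemma cylinderP A : A `<=` Omega -> cylinder A <-> exists n, determined A n.
Proof.
move=> AO; split=> [[n [E [_ [_ ->]]]] | [n detA]].
  by exists n => w v Ow [_ Ev] /agree_prefix wv; split; rewrite // wv.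
pose m := maxn n 1.
exists m, [set s | exists2 v, A v & s = Defs.prefix v m]; split.
  by rewrite leq_max orbT.
split=> [s [v Av ->] | ].
  by rewrite size_map size_iota; split=> //; apply: AO.
apply/seteqP; split=> [w Aw | w [Ow [v Av /agree_prefix wv]]].
  by split; [apply: AO | exists w].
exact: detA Av (agree_le (leq_maxl _ _) wv).
Qed.

Lemma determinedC A n : determined A n -> determined (Omega `\` A) n.
Proof.
move=> detA w v Ow [Ov nAv] wv; split=> // Aw.
exact/nAv/(detA v w Ov Aw (agree_sym wv)).
Qed.

Lemma determined_lower A n : A `<=` Omega -> determined A n -> lower A.
Proof.
move=> AO detA; apply/seteqP; split=> [w Aw k _ | w Aw].
  by split; [apply: AO | exists w].
have [Ow [v [Av vw]]] := Aw n I.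
by apply: detA Av _ => // i le_in; rewrite vw.
Qed.

Lemma lower_complement_open A p : lower A -> ~ A p -> exists n, forall w, agree w p n -> ~ A w.
Proof.
move=> lowA; rewrite lowA => /existsNP[n /not_implyP[_ notin_n]].
exists n => w wp Aw; have [Ow _] := Aw 0 I.
apply: notin_n; split; first exact: agree_Omega (agree_sym wp) Ow.
by exists w; split=> [|i le_in]; [rewrite lowA | rewrite wp].
Qed.

Lemma agree0_Omega w : agree w (fun=> false) 0 <-> Omega w.
Proof. by split=> [/(_ 0%N (leqnn 0)) | Ow i]; rewrite // leqn0 => /eqP ->. Qed.

Lemma clopen_locally_determined A p :
  lower A -> lower (Omega `\` A) -> Omega p -> locally_determined A p.
Proof.
move=> lowA lowC Op; have [Ap | nAp] := pselect (A p).
- have [|n notinC] := lower_complement_open lowC (p := p); first by case.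
  exists n => w wp; split=> // _; apply: contrapT => nAw.
  exact: notinC wp (conj (agree_Omega wp Op) nAw).
- have [n notinA] := lower_complement_open lowA nAp.
  by exists n => w wp; split=> // /(notinA w wp).
Qed.

Lemma clopen_cylinder A :
  A `<=` Omega -> lower A -> lower (Omega `\` A) -> cylinder A.
Proof.
move=> AO lowA lowC; apply/cylinderP => //.
have [|m detA] := locally_uniformly_determined (P := A) (b := fun=> false).
  by move=> p /agree0_Omega; apply: clopen_locally_determined.
exists m => w v Ow Av wv.
by apply/(detA w v _ _ wv) => //; apply/agree0_Omega => //; apply: AO.
Qed.

Lemma upper_lowerC A : A `<=` Omega -> upper A <-> lower (Omega `\` A).
Proof.
move=> AO; split=> [upA | lowC].
- apply/seteqP; split=> [w [Ow nAw] k _ | w inC].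
    by split=> //; exists w.
  have [Ow _] := inC 0%N I; split=> // Aw.
  move: Aw; rewrite upA => -[k _ [_]]; apply; exact: inC.
- apply/seteqP; split=> [w Aw | w [k _ [Ow notin_k]]].
    have /existsNP[k /not_implyP[_ notin_k]] :
        ~ (\bigcap_(n in [set: nat]) approx (Omega `\` A) n) w.
      by rewrite -lowC => -[].
    by exists k => //; split=> //; apply: AO.
  apply: contrapT => nAw; apply: notin_k; split=> //.
  by exists w; split.
Qed.

Theorem corollary4p3 :
  (forall A : set (nat -> bool), A `<=` Omega ->
     (lower A /\ upper A <-> cylinder A)) /\
  (forall A : set (nat -> bool), A `<=` Omega ->
     lower A -> lower (Omega `\` A) -> cylinder A).
Proof.
split=> [A AO | A AO]; last exact: clopen_cylinder.
rewrite upper_lowerC //; split=> [[] | cylA]; first exact: clopen_cylinder.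
have [n detA] := (cylinderP AO).1 cylA.
split; first exact: determined_lower detA.
by apply: determined_lower (determinedC detA) => w [].
Qed.
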